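(* Let $\mathbf{SGr}$ be the category of small symmetric 2-groups and symmetric strong monoidal functors, equipped with the nullhomotopy structure $\Theta$ described in the context. Then the pair (torsion symmetric 2-groups, torsion-free symmetric 2-groups) is a $\Theta$-torsion theory on $\mathbf{SGr}$; that is, (i) for every torsion symmetric 2-group $\mathcal T$, every torsion-free symmetric 2-group $\mathcal F$ and every symmetric monoidal functor $G\colon\mathcal T\to\mathcal F$, $\Theta(G)$ is a singleton, and (ii) every symmetric 2-group $\mathcal G$ sits in a $\Theta$-exact sequence $\mathcal T\xrightarrow{t}\mathcal G\xrightarrow{p}\mathcal F$ with $\mathcal T$ torsion and $\mathcal F$ torsion-free.
   Context: An object $A$ of a monoidal category is weakly invertible if $A\otimes B\cong B\otimes A\cong I$ for some $B$; a symmetric 2-group is a symmetric monoidal groupoid in which all objects are weakly invertible. In a symmetric 2-group, an object $X$ is a torsion object if $X^{\otimes n}\cong I$ for some positive integer $n$ (where $X^{\otimes1}=X$, $X^{\otimes(m+1)}=X\otimes X^{\otimes m}$). A symmetric 2-group is torsion if all its objects are torsion, and torsion-free if for every torsion object $X$ there is exactly one isomorphism $X\to I$. Monoidal functors are strong (coherence maps $e_F\colon I\to F(I)$, $m_F$ invertible). For $F\colon\mathcal M\to\mathcal N$, $\Theta(F)$ is the set of monoidal natural isomorphisms $F\Rightarrow\Delta_{I_{\mathcal N}}$ to the constant functor at the unit; for $P\colon\mathcal M'\to\mathcal M$, $Q\colon\mathcal N\to\mathcal N'$, $\varphi\in\Theta(F)$, $Q\bullet\varphi\bullet P\in\Theta(QFP)$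 has components $e_Q^{-1}\circ Q(\varphi_{PX})$ (written $\varphi\bullet P$, $Q\bullet\varphi$ when one functor is an identity). A $\Theta$-kernel of $F\colon\mathcal M\to\mathcal N$ is a triple $(\mathcal K,k,\theta)$ with $\theta\in\Theta(Fk)$ such that for all $(\mathcal H,h,\varphi)$ with $\varphi\in\Theta(Fh)$ there is a unique $h'$ with $kh'=h$ and $\theta\bullet h'=\varphi$; a $\Theta$-cokernel $(\mathcal C,c,\theta)$, $\theta\in\Theta(cF)$, is such that for all $(\mathcal D,d,\psi)$ with $\psi\in\Theta(dF)$ there is a unique $d'$ with $d'c=d$ and $d'\bullet\theta=\psi$. A $\Theta$-exact sequence $\mathcal X\xrightarrow{f}\mathcal Y\xrightarrow{g}\mathcal Z$ with $\theta\in\Theta(gf)$ is one where $(\mathcal X,f,\theta)$ is a $\Theta$-kernel of $g$ and $(\mathcal Z,g,\theta)$ is a $\Theta$-cokernel of $f$. All objects and functors are in $\mathbf{SGr}$. *)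

Record SMGpd : Type := {
  ob : Type;
  hom : ob -> ob -> Type;
  cmp : forall x y z : ob, hom y z -> hom x y -> hom x z;
  idm : forall x : ob, hom x x;
  cmpA : forall x y z w (h : hom z w) (g : hom y z) (f : hom x y),
      cmp x z w h (cmp x y z g f) = cmp x y w (cmp y z w h g) f;
  idl : forall x y (f : hom x y), cmp x y y (idm y) f = f;
  idr : forall x y (f : hom x y), cmp x x y f (idm x) = f;
  inv : forall x y, hom x y -> hom y x;
  invl : forall x y (f : hom x y), cmp x y x (inv x y f) f = idm x;
  invr : forall x y (f : hom x y), cmp y x y f (inv x y f) = idm y;
  ten : ob -> ob -> ob;
  tenm : forall x x' y y', hom x x' -> hom y y' -> hom (ten x y) (ten x' y');
  tenm_id : forall x y, tenm x x y y (idm x) (idm y) = idm (ten x y);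
  tenm_cmp : forall x x' x'' y y' y'' (g : hom x' x'') (f : hom x x')
      (g' : hom y' y'') (f' : hom y y'),
      tenm x x'' y y'' (cmp x x' x'' g f) (cmp y y' y'' g' f')
      = cmp _ _ _ (tenm x' x'' y' y'' g g') (tenm x x' y y' f f');
  unitob : ob;
  asc : forall x y z, hom (ten (ten x y) z) (ten x (ten y z));
  asc_nat : forall x x' y y' z z' (f : hom x x') (g : hom y y') (h : hom z z'),
      cmp _ _ _ (asc x' y' z') (tenm _ _ _ _ (tenm _ _ _ _ f g) h)
      = cmp _ _ _ (tenm _ _ _ _ f (tenm _ _ _ _ g h)) (asc x y z);
  lu : forall x, hom (ten unitob x) x;
  lu_nat : forall x y (f : hom x y),
      cmp _ _ _ (lu y) (tenm _ _ _ _ (idm unitob) f) = cmp _ _ _ f (lu x);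
  ru : forall x, hom (ten x unitob) x;
  ru_nat : forall x y (f : hom x y),
      cmp _ _ _ (ru y) (tenm _ _ _ _ f (idm unitob)) = cmp _ _ _ f (ru x);
  sy : forall x y, hom (ten x y) (ten y x);
  sy_nat : forall x x' y y' (f : hom x x') (g : hom y y'),
      cmp _ _ _ (sy x' y') (tenm _ _ _ _ f g) = cmp _ _ _ (tenm _ _ _ _ g f) (sy x y);
  pentagon : forall w x y z,
      cmp _ _ _ (asc w x (ten y z)) (asc (ten w x) y z)
      = cmp _ _ _ (tenm _ _ _ _ (idm w) (asc x y z))
          (cmp _ _ _ (asc w (ten x y) z) (tenm _ _ _ _ (asc w x y) (idm z)));
  triangle : forall x y,
      cmp _ _ _ (tenm _ _ _ _ (idm x) (lu y)) (asc x unitob y)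
      = tenm _ _ _ _ (ru x) (idm y);
  hexagon : forall x y z,
      cmp _ _ _ (asc y z x) (cmp _ _ _ (sy x (ten y z)) (asc x y z))
      = cmp _ _ _ (tenm _ _ _ _ (idm y) (sy x z))
          (cmp _ _ _ (asc y x z) (tenm _ _ _ _ (sy x y) (idm z)));
  sy_invol : forall x y, cmp _ _ _ (sy y x) (sy x y) = idm (ten x y)
}.

Arguments hom {s} _ _.
Arguments cmp {s x y z} _ _.
Arguments idm {s} _.
Arguments inv {s x y} _.
Arguments ten {s} _ _.
Arguments tenm {s x x' y y'} _ _.
Arguments unitob {s}.
Arguments asc {s} _ _ _.
Arguments lu {s} _.
Arguments ru {s} _.
Arguments sy {s} _ _.

Declare Scope sg_scope.
Notation "g ∘ f" := (cmp g f) (at level 40, left associativity) : sg_scope.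
Notation "x ⊗ y" := (ten x y) (at level 35, right associativity) : sg_scope.
Open Scope sg_scope.

Definition isIso {G : SMGpd} {x y : ob G} (f : hom x y) : Prop :=
  exists g : hom y x, g ∘ f = idm x /\ f ∘ g = idm y.

Definition Iso {G : SMGpd} (x y : ob G) : Prop :=
  exists f : hom x y, isIso f.

Definition weakly_invertible {G : SMGpd} (A : ob G) : Prop :=
  exists B : ob G, Iso (A ⊗ B) unitob /\ Iso (B ⊗ A) unitob.

Record SG : Type := {
  sg_gpd :> SMGpd;
  sg_winv : forall A : ob sg_gpd, weakly_invertible A
}.

(* X^{⊗1} = X, X^{⊗(m+1)} = X ⊗ X^{⊗m}  (value at 0 is never used). *)
Fixpoint tpow {G : SMGpd} (X : ob G) (n : nat) : ob G :=
  match n with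
  | O => unitob
  | S O => X
  | S m => X ⊗ tpow X m
  end.

Definition torsion_obj {G : SMGpd} (X : ob G) : Prop :=
  exists n : nat, 1 <= n /\ Iso (tpow X n) unitob.

Definition is_torsion (G : SMGpd) : Prop :=
  forall X : ob G, torsion_obj X.

Definition is_torsion_free (G : SMGpd) : Prop :=
  forall X : ob G, torsion_obj X ->
    exists f : hom X unitob, isIso f /\ forall g : hom X unitob, isIso g -> g = f.

(* Functors: data, and the predicate of being symmetric (strong)       *)
(* monoidal.  Strongness (invertibility of e, m) is automatic since    *)
(* the target is a groupoid.                                           *)
Record Fun (M N : SMGpd) : Type := {
  fo : ob M -> ob N;
  fm : forall x y : ob M, hom x y -> hom (fo x) (fo y);
  fe : hom (@unitob N) (fo unitob);
  fmu : forall x y : ob M, hom (fo x ⊗ fo y) (fo (x ⊗ y))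
}.
Arguments fo {M N} _ _.
Arguments fm {M N} _ {x y} _.
Arguments fe {M N} _.
Arguments fmu {M N} _ _ _.

Definition is_smf {M N : SMGpd} (F : Fun M N) : Prop :=
  (forall x, fm F (idm x) = idm (fo F x)) /\
  (forall x y z (g : hom y z) (f : hom x y), fm F (g ∘ f) = fm F g ∘ fm F f) /\
  (forall x x' y y' (f : hom x x') (g : hom y y'),
      fmu F x' y' ∘ tenm (fm F f) (fm F g) = fm F (tenm f g) ∘ fmu F x y) /\
  (forall x y z,
      fm F (asc x y z) ∘ fmu F (x ⊗ y) z ∘ tenm (fmu F x y) (idm (fo F z))
      = fmu F x (y ⊗ z) ∘ tenm (idm (fo F x)) (fmu F y z)
          ∘ asc (fo F x) (fo F y) (fo F z)) /\
  (forall x, fm F (lu x) ∘ fmu F unitob x ∘ tenm (fe F) (idm (fo F x))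
             = lu (fo F x)) /\
  (forall x, fm F (ru x) ∘ fmu F x unitob ∘ tenm (idm (fo F x)) (fe F)
             = ru (fo F x)) /\
  (forall x y, fm F (sy x y) ∘ fmu F x y = fmu F y x ∘ sy (fo F x) (fo F y)).

Definition compF {M N P : SMGpd} (G : Fun N P) (F : Fun M N) : Fun M P := {|
  fo := fun x => fo G (fo F x);
  fm := fun x y f => fm G (fm F f);
  fe := fm G (fe F) ∘ fe G;
  fmu := fun x y => fm G (fmu F x y) ∘ fmu G (fo F x) (fo F y)
|}.

(* Theta(F): monoidal natural isomorphisms F => Delta_I, where Delta_I *)
(* is the constant functor at the unit (fm = id, e = id_I,             *)
(* m = lambda_I : I ⊗ I -> I).  Invertibility of components is         *)
(* automatic in a groupoid.                                            *)
Definition ThetaData {M N : SMGpd} (F : Fun M N) : Type :=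
  forall x : ob M, hom (fo F x) (@unitob N).

Definition is_theta {M N : SMGpd} (F : Fun M N) (phi : ThetaData F) : Prop :=
  (forall x y (f : hom x y), idm unitob ∘ phi x = phi y ∘ fm F f) /\
  (forall x y, phi (x ⊗ y) ∘ fmu F x y = lu unitob ∘ tenm (phi x) (phi y)) /\
  (phi unitob ∘ fe F = idm unitob).

Definition lwhisk {M' M N : SMGpd} {F : Fun M N} (phi : ThetaData F) (P : Fun M' M)
  : ThetaData (compF F P) := fun x => phi (fo P x).

Definition rwhisk {M N N' : SMGpd} (Q : Fun N N') {F : Fun M N} (phi : ThetaData F)
  : ThetaData (compF Q F) := fun x => inv (fe Q) ∘ fm Q (phi x).

(* The equality "theta • h' = phi" lives in Theta(F k h') = Theta(F h) *)
(* (the functors being equal); it is expressed as an equality of       *)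
(* dependent pairs.                                                    *)
Definition theta_kernel {M N : SG} (F : Fun M N)
    (K : SG) (k : Fun K M) (theta : ThetaData (compF F k)) : Prop :=
  is_smf k /\ is_theta (compF F k) theta /\
  forall (H : SG) (h : Fun H M) (phi : ThetaData (compF F h)),
    is_smf h -> is_theta (compF F h) phi ->
    exists h' : Fun H K,
      (is_smf h' /\ compF k h' = h /\
       existT (@ThetaData H N) (compF (compF F k) h') (lwhisk theta h')
       = existT (@ThetaData H N) (compF F h) phi) /\
      forall h'' : Fun H K,
        is_smf h'' -> compF k h'' = h ->
        existT (@ThetaData H N) (compF (compF F k) h'') (lwhisk theta h'')
        = existT (@ThetaData H N) (compF F h) phi ->
        h'' = h'.

Definition theta_cokernel {M N : SG} (F : Fun M N)
    (C : SG) (c : Fun N C) (theta : ThetaData (compF c F)) : Prop :=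
  is_smf c /\ is_theta (compF c F) theta /\
  forall (D : SG) (d : Fun N D) (psi : ThetaData (compF d F)),
    is_smf d -> is_theta (compF d F) psi ->
    exists d' : Fun C D,
      (is_smf d' /\ compF d' c = d /\
       existT (@ThetaData M D) (compF d' (compF c F)) (rwhisk d' theta)
       = existT (@ThetaData M D) (compF d F) psi) /\
      forall d'' : Fun C D,
        is_smf d'' -> compF d'' c = d ->
        existT (@ThetaData M D) (compF d'' (compF c F)) (rwhisk d'' theta)
        = existT (@ThetaData M D) (compF d F) psi ->
        d'' = d'.

Definition theta_exact {X Y Z : SG} (f : Fun X Y) (g : Fun Y Z)
    (theta : ThetaData (compF g f)) : Prop :=
  theta_kernel g X f theta /\ theta_cokernel f Z g theta.

(* A monoidal functor preserves torsion objects, and in a torsion-free 2-group there is exactly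
   one morphism from a torsion object to [I]; so for [G : T -> F] every naturality and
   monoidality condition on a family [G x -> I] holds automatically, which gives (i).

   For (ii), [T] is the full sub-2-group of torsion objects of [G], and [F] has the objects of
   [G] with a unique morphism [x -> y] whenever [x ≅ t ⊗ y] for some torsion object [t].
   Since [F] is posetal, the kernel property is immediate.  For the cokernel property, let
   [d : G -> D] be trivialised on [T] by [psi].  Then [d] sends every endomorphism [h] of an
   object [a] to the identity, because after tensoring with a weak inverse [a'] it becomes an
   endomorphism of the torsion object [a ⊗ a' ≅ I].  So [d] identifies parallel morphisms,
   and [x -> y] in [F], witnessed by [f : x -> t ⊗ y], can be sent to
   [λ ∘ (psi_t ⊗ 1) ∘ μ⁻¹ ∘ d f] without depending on the witness. *)

From Stdlib Require Import Setoid Morphisms Lia PeanoNat.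
From Stdlib Require Import ProofIrrelevance FunctionalExtensionality ClassicalEpsilon Eqdep.

#[local] Arguments cmpA {s x y z w} h g f.
#[local] Arguments idl {s x y} f.
#[local] Arguments idr {s x y} f.
#[local] Arguments invl {s x y} f.
#[local] Arguments invr {s x y} f.
#[local] Arguments tenm_id {s} x y.
#[local] Arguments tenm_cmp {s x x' x'' y y' y''} g f g' f'.
#[local] Arguments asc_nat {s x x' y y' z z'} f g h.
#[local] Arguments lu_nat {s x y} f.
#[local] Arguments ru_nat {s x y} f.
#[local] Arguments sy_nat {s x x' y y'} f g.
#[local] Arguments pentagon {s} w x y z.
#[local] Arguments triangle {s} x y.
#[local] Arguments sy_invol {s} x y.

Section GroupoidCalculus.
Context {G : SMGpd}.

Lemma cmpKl {x y z : ob G} (f : hom y z) (g : hom x y) : inv f ∘ (f ∘ g) = g.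
Proof. rewrite cmpA, invl, idl. reflexivity. Qed.

Lemma cmpKVl {x y z : ob G} (f : hom y z) (g : hom x z) : f ∘ (inv f ∘ g) = g.
Proof. rewrite cmpA, invr, idl. reflexivity. Qed.

Lemma cmpKr {x y z : ob G} (f : hom x y) (g : hom y z) : g ∘ f ∘ inv f = g.
Proof. rewrite <- cmpA, invr, idr. reflexivity. Qed.

Lemma cmpKVr {x y z : ob G} (f : hom x y) (g : hom x z) : g ∘ inv f ∘ f = g.
Proof. rewrite <- cmpA, invl, idr. reflexivity. Qed.

Lemma cmp_cancel_l {w x y : ob G} (f : hom x y) (g1 g2 : hom w x) :
  f ∘ g1 = f ∘ g2 -> g1 = g2.
Proof. intro E. rewrite <- (cmpKl f g1), E, cmpKl. reflexivity. Qed.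

Lemma cmp_cancel_r {w x y : ob G} (f : hom x y) (g1 g2 : hom y w) :
  g1 ∘ f = g2 ∘ f -> g1 = g2.
Proof. intro E. rewrite <- (cmpKr f g1), E, cmpKr. reflexivity. Qed.

Lemma inv_unique {x y : ob G} (f : hom x y) (g : hom y x) : g ∘ f = idm x -> inv f = g.
Proof. intro E. apply (cmp_cancel_r f). rewrite invl, E. reflexivity. Qed.

Lemma inv_cmp {x y z : ob G} (g : hom y z) (f : hom x y) : inv (g ∘ f) = inv f ∘ inv g.
Proof. apply inv_unique. rewrite cmpA, <- (cmpA (inv f)), invl, idr, invl. reflexivity. Qed.

Lemma inv_idm (x : ob G) : inv (idm x) = idm x.
Proof. apply inv_unique, idl. Qed.

Lemma inv_tenm {x x' y y' : ob G} (f : hom x x') (g : hom y y') :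
  inv (tenm f g) = tenm (inv f) (inv g).
Proof. apply inv_unique. rewrite <- tenm_cmp, !invl, tenm_id. reflexivity. Qed.

Lemma inv_cmp3 {w x y z : ob G} (A : hom y z) (B : hom x y) (C : hom w x) (L : hom w z) :
  A ∘ B ∘ C = L -> inv B ∘ inv A = C ∘ inv L.
Proof. intros <-. rewrite !inv_cmp, cmpKVl. reflexivity. Qed.

Lemma tenm_decomp {x x' y y' : ob G} (f : hom x x') (g : hom y y') :
  tenm f g = tenm f (idm y') ∘ tenm (idm x) g.
Proof. rewrite <- tenm_cmp, idl, idr. reflexivity. Qed.

Lemma tenm_decomp' {x x' y y' : ob G} (f : hom x x') (g : hom y y') :
  tenm f g = tenm (idm x') g ∘ tenm f (idm y).
Proof. rewrite <- tenm_cmp, idl, idr. reflexivity. Qed.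

Lemma tenm_commute {x x' y y' : ob G} (f : hom x x') (g : hom y y') :
  tenm (idm x') g ∘ tenm f (idm y) = tenm f (idm y') ∘ tenm (idm x) g.
Proof. rewrite <- tenm_decomp, <- tenm_decomp'. reflexivity. Qed.

Lemma tenm_cmp_l {x x' x'' y : ob G} (f : hom x' x'') (g : hom x x') :
  tenm f (idm y) ∘ tenm g (idm y) = tenm (f ∘ g) (idm y).
Proof. rewrite <- tenm_cmp, idl. reflexivity. Qed.

Lemma tenm_cmp_r {x y y' y'' : ob G} (f : hom y' y'') (g : hom y y') :
  tenm (idm x) f ∘ tenm (idm x) g = tenm (idm x) (f ∘ g).
Proof. rewrite <- tenm_cmp, idl. reflexivity. Qed.

Lemma postcomp_eq2 {x y z w : ob G} (X : hom y z) (Y : hom x y) (Z : hom x z) (W : hom z w) :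
  X ∘ Y = Z -> W ∘ X ∘ Y = W ∘ Z.
Proof. intros <-. rewrite cmpA. reflexivity. Qed.

Lemma postcomp_eq3 {v x y z w : ob G} (X : hom y z) (Y : hom x y) (Y0 : hom v x)
  (Z : hom v z) (W : hom z w) :
  X ∘ Y ∘ Y0 = Z -> W ∘ X ∘ Y ∘ Y0 = W ∘ Z.
Proof. intros <-. rewrite !cmpA. reflexivity. Qed.

End GroupoidCalculus.

(* [rewrite_assoc E] rewrites with [E] inside a left-associated chain of composites, even
   when the left side of [E] is itself a composite of two or three morphisms. *)
Ltac reassoc := repeat rewrite cmpA.
Ltac rewrite_assoc E :=
  reassoc;
  first [rewrite E | rewrite (postcomp_eq2 _ _ _ _ E) | rewrite (postcomp_eq3 _ _ _ _ _ E)];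
  reassoc.

Section Coherence.
Context {G : SMGpd}.

Lemma lu_asc (x y : ob G) : lu (x ⊗ y) ∘ asc unitob x y = tenm (lu x) (idm y).
Proof.
  assert (lu_faithful : forall (a b : ob G) (u v : hom a b),
             tenm (idm unitob) u = tenm (idm unitob) v -> u = v).
  { intros a b u v E. apply (cmp_cancel_r (lu a)). rewrite <- !lu_nat, E. reflexivity. }
  apply lu_faithful.
  apply (cmp_cancel_r (asc unitob (unitob ⊗ x) y ∘ tenm (asc unitob unitob x) (idm y))).
  rewrite <- (idl (idm unitob)) at 1. rewrite tenm_cmp.
  rewrite <- cmpA, <- pentagon, cmpA, triangle, <- (tenm_id x y), <- asc_nat, <- triangle.
  rewrite <- (idl (idm y)) at 1. rewrite tenm_cmp, !cmpA, asc_nat. reflexivity.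
Qed.

Lemma lu_unit_ru_unit : lu (@unitob G) = ru unitob.
Proof.
  apply (cmp_cancel_r (ru (unitob ⊗ unitob))).
  rewrite <- !ru_nat, <- triangle, <- lu_asc.
  f_equal. f_equal. apply (cmp_cancel_l (lu unitob)). rewrite lu_nat. reflexivity.
Qed.

Lemma contract_two_units {a b c e : ob G} (al : hom a unitob) (be : hom b unitob)
  (k : hom e (b ⊗ c)) :
  lu c ∘ tenm (lu unitob ∘ tenm al be) (idm c) ∘ inv (asc a b c) ∘ tenm (idm a) k
  = lu c ∘ tenm be (idm c) ∘ k ∘ lu e ∘ tenm al (idm e).
Proof.
  assert (E1 : k ∘ lu e = lu (b ⊗ c) ∘ tenm (idm unitob) k) by (symmetry; apply lu_nat).
  assert (E2 : tenm (idm unitob) k ∘ tenm al (idm e) = tenm al (idm (b ⊗ c)) ∘ tenm (idm a) k)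
    by apply tenm_commute.
  assert (E3 : tenm be (idm c) ∘ lu (b ⊗ c)
               = lu (unitob ⊗ c) ∘ tenm (idm unitob) (tenm be (idm c)))
    by (symmetry; apply lu_nat).
  assert (E4 : tenm (idm unitob) (tenm be (idm c)) ∘ tenm al (idm (b ⊗ c))
               = tenm al (tenm be (idm c)))
    by (rewrite <- tenm_cmp, idl, idr; reflexivity).
  assert (E5 : tenm (tenm al be) (idm c) ∘ inv (asc a b c)
               = inv (asc unitob unitob c) ∘ tenm al (tenm be (idm c))).
  { apply (cmp_cancel_l (asc unitob unitob c)). rewrite cmpKVl, cmpA, asc_nat, cmpKr.
    reflexivity. }
  assert (E6 : tenm (lu unitob) (idm c) ∘ inv (asc unitob unitob c) = lu (unitob ⊗ c))
    by (rewrite <- lu_asc, cmpKr; reflexivity).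
  rewrite_assoc E1. rewrite_assoc E2. rewrite_assoc E3. rewrite_assoc E4.
  rewrite <- tenm_cmp_l. rewrite_assoc E5. rewrite_assoc E6. reflexivity.
Qed.

Lemma contract_unit_assoc {a u v w : ob G} (ps : hom a unitob) (m : hom (u ⊗ v) w) :
  m ∘ tenm (lu u) (idm v) ∘ tenm (tenm ps (idm u)) (idm v)
  = lu w ∘ tenm ps (idm w) ∘ tenm (idm a) m ∘ asc a u v.
Proof.
  assert (E1 : tenm ps (idm w) ∘ tenm (idm a) m = tenm (idm unitob) m ∘ tenm ps (idm (u ⊗ v)))
    by (symmetry; apply tenm_commute).
  assert (E2 : tenm ps (idm (u ⊗ v)) ∘ asc a u v
               = asc unitob u v ∘ tenm (tenm ps (idm u)) (idm v))
    by (rewrite asc_nat, tenm_id; reflexivity).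
  rewrite_assoc E1. rewrite_assoc (lu_nat m). rewrite_assoc E2. rewrite_assoc (lu_asc u v).
  reflexivity.
Qed.

End Coherence.

Lemma isIso_hom {G : SMGpd} {x y : ob G} (f : hom x y) : isIso f.
Proof. exists (inv f). split; [apply invl | apply invr]. Qed.

Lemma Iso_hom {G : SMGpd} {x y : ob G} (f : hom x y) : Iso x y.
Proof. exists f. apply isIso_hom. Qed.

Add Parametric Relation (G : SMGpd) : (ob G) (@Iso G)
  reflexivity proved by (fun x => Iso_hom (idm x))
  symmetry proved by (fun x y '(ex_intro _ f _) => Iso_hom (inv f))
  transitivity proved by (fun x y z '(ex_intro _ f _) '(ex_intro _ g _) => Iso_hom (g ∘ f))
  as Iso_rel.

Add Parametric Morphism (G : SMGpd) : (@ten G)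
  with signature Iso ==> Iso ==> Iso as ten_Iso.
Proof. intros x x' [f _] y y' [g _]. exact (Iso_hom (tenm f g)). Qed.

Section IsoCalculus.
Context {G : SMGpd}.

Lemma Iso_asc (x y z : ob G) : Iso ((x ⊗ y) ⊗ z) (x ⊗ (y ⊗ z)).
Proof. exact (Iso_hom (asc x y z)). Qed.

Lemma Iso_lu (x : ob G) : Iso (unitob ⊗ x) x.
Proof. exact (Iso_hom (lu x)). Qed.

Lemma Iso_ru (x : ob G) : Iso (x ⊗ unitob) x.
Proof. exact (Iso_hom (ru x)). Qed.

Lemma Iso_sy (x y : ob G) : Iso (x ⊗ y) (y ⊗ x).
Proof. exact (Iso_hom (sy x y)). Qed.

Lemma Iso_interchange (a b c d : ob G) : Iso ((a ⊗ b) ⊗ (c ⊗ d)) ((a ⊗ c) ⊗ (b ⊗ d)).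
Proof.
  rewrite Iso_asc, <- (Iso_asc b c d), (Iso_sy b c), (Iso_asc c b d), <- Iso_asc.
  reflexivity.
Qed.

End IsoCalculus.

Lemma Iso_ten_cancel_r {G : SG} (t t' y : ob G) : Iso (t ⊗ y) (t' ⊗ y) -> Iso t t'.
Proof.
  intro E. destruct (sg_winv G y) as [y' [Hy _]].
  rewrite <- (Iso_ru t), <- (Iso_ru t'), <- Hy, <- !Iso_asc, E. reflexivity.
Qed.

(** * Torsion objects *)

(* [tpow] has [tpow X 1 = X]; the unital power [upow] is the convenient one to compute with. *)
Fixpoint upow {G : SMGpd} (a : ob G) (n : nat) : ob G :=
  match n with O => unitob | S m => a ⊗ upow a m end.

Add Parametric Morphism (G : SMGpd) : (@upow G)
  with signature Iso ==> eq ==> Iso as upow_Iso.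
Proof.
  intros a b E n. induction n as [|n IH]; simpl; [reflexivity | apply ten_Iso; assumption].
Qed.

Section UnitalPowers.
Context {G : SMGpd}.

Lemma tpow_upow (a : ob G) n : 1 <= n -> Iso (tpow a n) (upow a n).
Proof.
  induction n as [|[|n] IH]; intro Hn; [lia | simpl; symmetry; apply Iso_ru |].
  change (Iso (a ⊗ tpow a (S n)) (a ⊗ upow a (S n))). rewrite IH by lia. reflexivity.
Qed.

Lemma torsion_objE (a : ob G) : torsion_obj a <-> exists n, 1 <= n /\ Iso (upow a n) unitob.
Proof.
  split; intros [n [Hn E]]; exists n; split; auto; rewrite <- E.
  - symmetry. apply tpow_upow, Hn.
  - apply tpow_upow, Hn.
Qed.

Lemma upow_add (a : ob G) n m : Iso (upow a (n + m)) (upow a n ⊗ upow a m).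
Proof.
  induction n as [|n IH]; simpl; [symmetry; apply Iso_lu |].
  rewrite IH, Iso_asc. reflexivity.
Qed.

Lemma upow_mul (a : ob G) n m : Iso (upow a (n * m)) (upow (upow a n) m).
Proof.
  induction m as [|m IH]; simpl; [rewrite Nat.mul_0_r; reflexivity |].
  rewrite Nat.mul_succ_r, upow_add, IH, Iso_sy. reflexivity.
Qed.

Lemma upow_ten (a b : ob G) n : Iso (upow (a ⊗ b) n) (upow a n ⊗ upow b n).
Proof.
  induction n as [|n IH]; simpl; [symmetry; apply Iso_lu |].
  rewrite IH, Iso_interchange. reflexivity.
Qed.

Lemma upow_unit n : Iso (upow (@unitob G) n) unitob.
Proof. induction n as [|n IH]; simpl; [reflexivity | rewrite IH; apply Iso_lu]. Qed.

End UnitalPowers.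

Add Parametric Morphism (G : SMGpd) : (@torsion_obj G)
  with signature Iso ==> iff as torsion_obj_Iso.
Proof.
  intros a b E. rewrite !torsion_objE.
  split; intros [n [Hn Hp]]; exists n; split; auto; [rewrite <- E | rewrite E]; exact Hp.
Qed.

Section TorsionObjects.
Context {G : SMGpd}.

Lemma torsion_obj_unit : torsion_obj (@unitob G).
Proof. exists 1. split; [lia | reflexivity]. Qed.

Lemma torsion_obj_Iso_unit (a : ob G) : Iso a unitob -> torsion_obj a.
Proof. intros ->. apply torsion_obj_unit. Qed.

Lemma torsion_obj_ten (a b : ob G) : torsion_obj a -> torsion_obj b -> torsion_obj (a ⊗ b).
Proof.
  rewrite !torsion_objE. intros [n [Hn Ha]] [m [Hm Hb]].
  exists (n * m). split; [nia |].
  rewrite upow_ten, upow_mul, (Nat.mul_comm n m), upow_mul, Ha, Hb, !upow_unit.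
  apply Iso_lu.
Qed.

Lemma torsion_obj_winv (a b : ob G) : torsion_obj a -> Iso (a ⊗ b) unitob -> torsion_obj b.
Proof.
  rewrite !torsion_objE. intros [n [Hn Ha]] E. exists n. split; auto.
  transitivity (upow a n ⊗ upow b n); [rewrite Ha; symmetry; apply Iso_lu |].
  rewrite <- upow_ten, E. apply upow_unit.
Qed.

Lemma torsion_obj_upow_inv (a : ob G) n : 1 <= n -> torsion_obj (upow a n) -> torsion_obj a.
Proof.
  rewrite !torsion_objE. intros Hn [m [Hm E]]. exists (n * m). split; [nia |].
  rewrite upow_mul. exact E.
Qed.

End TorsionObjects.

Lemma fo_upow {M N : SMGpd} (F : Fun M N) (a : ob M) n :
  Iso (fo F (upow a n)) (upow (fo F a) n).
Proof.
  induction n as [|n IH]; simpl; [symmetry; exact (Iso_hom (fe F)) |].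
  rewrite <- IH. symmetry. exact (Iso_hom (fmu F _ _)).
Qed.

Lemma fo_torsion_obj {M N : SMGpd} (F : Fun M N) (a : ob M) :
  torsion_obj a -> torsion_obj (fo F a).
Proof.
  rewrite !torsion_objE. intros [n [Hn [f _]]]. exists n. split; auto.
  rewrite <- fo_upow, (Iso_hom (fm F f)). symmetry. exact (Iso_hom (fe F)).
Qed.

Lemma torsion_free_hom_unique {G : SMGpd} (HG : is_torsion_free G) (x : ob G)
  (Hx : torsion_obj x) (f g : hom x unitob) : f = g.
Proof.
  destruct (HG x Hx) as [h [_ U]].
  rewrite (U f (isIso_hom f)), (U g (isIso_hom g)). reflexivity.
Qed.

Lemma Theta_torsion_torsion_free_singleton (T F : SG) (G : Fun T F) :
  is_torsion T -> is_torsion_free F ->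
  exists phi : ThetaData G,
    is_theta G phi /\ forall psi : ThetaData G, is_theta G psi -> psi = phi.
Proof.
  intros HT HF.
  assert (Ht : forall x, torsion_obj (fo G x)) by (intro; apply fo_torsion_obj, HT).
  exists (fun x => proj1_sig (constructive_indefinite_description _ (HF _ (Ht x)))).
  split; [split; [|split] |].
  - intros. apply (torsion_free_hom_unique HF _ (Ht x)).
  - intros. apply (torsion_free_hom_unique HF), torsion_obj_ten; auto.
  - apply (torsion_free_hom_unique HF), torsion_obj_unit.
  - intros psi _. apply functional_extensionality_dep. intro x.
    apply (torsion_free_hom_unique HF _ (Ht x)).
Qed.

Section SmfProjections.
Context {M N : SMGpd} {F : Fun M N} (HF : is_smf F).

Lemma smf_idm x : fm F (idm x) = idm (fo F x).
Proof. apply HF. Qed.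

Lemma smf_cmp {x y z} (g : hom y z) (f : hom x y) : fm F (g ∘ f) = fm F g ∘ fm F f.
Proof. apply HF. Qed.

Lemma smf_fmu_nat {x x' y y'} (f : hom x x') (g : hom y y') :
  fmu F x' y' ∘ tenm (fm F f) (fm F g) = fm F (tenm f g) ∘ fmu F x y.
Proof. apply HF. Qed.

Lemma smf_asc x y z :
  fm F (asc x y z) ∘ fmu F (x ⊗ y) z ∘ tenm (fmu F x y) (idm (fo F z))
  = fmu F x (y ⊗ z) ∘ tenm (idm (fo F x)) (fmu F y z) ∘ asc (fo F x) (fo F y) (fo F z).
Proof. apply HF. Qed.

Lemma smf_lu x : fm F (lu x) ∘ fmu F unitob x ∘ tenm (fe F) (idm (fo F x)) = lu (fo F x).
Proof. apply HF. Qed.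

Lemma smf_ru x : fm F (ru x) ∘ fmu F x unitob ∘ tenm (idm (fo F x)) (fe F) = ru (fo F x).
Proof. apply HF. Qed.

Lemma smf_sy x y : fm F (sy x y) ∘ fmu F x y = fmu F y x ∘ sy (fo F x) (fo F y).
Proof. apply HF. Qed.

Lemma smf_inv {x y} (f : hom x y) : fm F (inv f) = inv (fm F f).
Proof. symmetry. apply inv_unique. rewrite <- smf_cmp, invl, smf_idm. reflexivity. Qed.

Lemma smf_fmu_inv_l {x x' y} (s : hom x x') :
  inv (fmu F x' y) ∘ fm F (tenm s (idm y)) = tenm (fm F s) (idm _) ∘ inv (fmu F x y).
Proof.
  apply (cmp_cancel_l (fmu F x' y)). rewrite cmpKVl, cmpA, <- (smf_idm y), smf_fmu_nat, cmpKr.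
  reflexivity.
Qed.

Lemma smf_fmu_inv_r {x y y'} (s : hom y y') :
  inv (fmu F x y') ∘ fm F (tenm (idm x) s) = tenm (idm _) (fm F s) ∘ inv (fmu F x y).
Proof.
  apply (cmp_cancel_l (fmu F x y')). rewrite cmpKVl, cmpA, <- (smf_idm x), smf_fmu_nat, cmpKr.
  reflexivity.
Qed.

End SmfProjections.

Section ThetaProjections.
Context {M N : SMGpd} {F : Fun M N} {phi : ThetaData F} (Hphi : is_theta F phi).

Lemma theta_nat {x y} (f : hom x y) : phi y ∘ fm F f = phi x.
Proof. rewrite <- (proj1 Hphi), idl. reflexivity. Qed.

Lemma theta_fmu x y : phi (x ⊗ y) ∘ fmu F x y = lu unitob ∘ tenm (phi x) (phi y).
Proof. apply Hphi. Qed.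

Lemma theta_fe : phi unitob ∘ fe F = idm unitob.
Proof. apply Hphi. Qed.

End ThetaProjections.

(** * The torsion part and the torsion-free quotient *)

Definition tors_ob (G : SMGpd) : Type := {x : ob G | torsion_obj x}.

Definition tors_gpd (G : SMGpd) : SMGpd.
Proof.
  refine {| ob := tors_ob G; hom := fun a b => hom (proj1_sig a) (proj1_sig b);
            cmp := fun a b c g f => g ∘ f;
            idm := fun a => idm (proj1_sig a);
            inv := fun a b f => inv f;
            ten := fun a b => exist _ (proj1_sig a ⊗ proj1_sig b)
                                (torsion_obj_ten _ _ (proj2_sig a) (proj2_sig b));
            tenm := fun a a' b b' f g => tenm f g;
            unitob := exist _ unitob torsion_obj_unit;
            asc := fun a b c => asc (proj1_sig a) (proj1_sig b) (proj1_sig c);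
            lu := fun a => lu (proj1_sig a);
            ru := fun a => ru (proj1_sig a);
            sy := fun a b => sy (proj1_sig a) (proj1_sig b) |}; intros.
  all: first [apply cmpA | apply idl | apply idr | apply invl | apply invr | apply tenm_id
        | apply tenm_cmp | apply asc_nat | apply lu_nat | apply ru_nat | apply sy_nat
        | apply pentagon | apply triangle | apply hexagon | apply sy_invol].
Defined.

Lemma tpow_tors (G : SMGpd) (X : ob (tors_gpd G)) n :
  proj1_sig (@tpow (tors_gpd G) X n) = tpow (proj1_sig X) n.
Proof.
  induction n as [|[|n] IH]; [reflexivity | reflexivity |].
  change (proj1_sig X ⊗ proj1_sig (@tpow (tors_gpd G) X (S n))
          = proj1_sig X ⊗ tpow (proj1_sig X) (S n)).
  rewrite IH. reflexivity.
Qed.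

Lemma tors_gpd_winv (G : SG) (A : ob (tors_gpd G)) : weakly_invertible A.
Proof.
  destruct A as [x Hx], (sg_winv G x) as [B [H1 H2]].
  exists (exist _ B (torsion_obj_winv x B Hx H1)). split; assumption.
Qed.

Definition TorsSG (G : SG) : SG := {| sg_gpd := tors_gpd G; sg_winv := tors_gpd_winv G |}.

Lemma TorsSG_torsion (G : SG) : is_torsion (TorsSG G).
Proof.
  intros [x [n [Hn E]]]. exists n. split; auto.
  change (Iso (proj1_sig (@tpow (tors_gpd G) (exist _ x (ex_intro _ n (conj Hn E))) n)) unitob).
  rewrite tpow_tors. exact E.
Qed.

(* The hom-types of the torsion-free quotient; being propositions, they make it posetal. *)
Definition tors_rel {G : SMGpd} (x y : ob G) : Prop :=
  exists t, torsion_obj t /\ Iso x (t ⊗ y).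

Section TorsRel.
Context {G : SMGpd}.

Lemma tors_rel_hom {x y : ob G} (f : hom x y) : tors_rel x y.
Proof. exists unitob. split; [apply torsion_obj_unit |]. rewrite Iso_lu. exact (Iso_hom f). Qed.

Lemma tors_rel_trans {x y z : ob G} : tors_rel y z -> tors_rel x y -> tors_rel x z.
Proof.
  intros [s [Hs Ey]] [t [Ht Ex]]. exists (t ⊗ s). split; [apply torsion_obj_ten; auto |].
  rewrite Ex, Ey, Iso_asc. reflexivity.
Qed.

Lemma tors_rel_ten {x x' y y' : ob G} :
  tors_rel x x' -> tors_rel y y' -> tors_rel (x ⊗ y) (x' ⊗ y').
Proof.
  intros [t [Ht Ex]] [s [Hs Ey]]. exists (t ⊗ s). split; [apply torsion_obj_ten; auto |].
  rewrite Ex, Ey. apply Iso_interchange.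
Qed.

Lemma tors_rel_unit {x : ob G} : torsion_obj x -> tors_rel x unitob.
Proof. intro H. exists x. split; auto. symmetry. apply Iso_ru. Qed.

Lemma tors_rel_unit_torsion {x : ob G} : tors_rel x unitob -> torsion_obj x.
Proof. intros [t [Ht E]]. rewrite E, Iso_ru. exact Ht. Qed.

End TorsRel.

Lemma tors_rel_sym {G : SG} {x y : ob G} : tors_rel x y -> tors_rel y x.
Proof.
  intros [t [Ht E]]. destruct (sg_winv G t) as [t' [H1 H2]].
  exists t'. split; [apply (torsion_obj_winv t); auto |].
  rewrite E, <- Iso_asc, H2. symmetry. apply Iso_lu.
Qed.

Definition free_gpd (G : SG) : SMGpd.
Proof.
  refine {| ob := ob G; hom := fun x y => tors_rel x y;
            cmp := fun x y z g f => tors_rel_trans g f;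
            idm := fun x => tors_rel_hom (idm x);
            inv := fun x y f => tors_rel_sym f;
            ten := fun x y => x ⊗ y;
            tenm := fun x x' y y' f g => tors_rel_ten f g;
            unitob := unitob;
            asc := fun x y z => tors_rel_hom (asc x y z);
            lu := fun x => tors_rel_hom (lu x);
            ru := fun x => tors_rel_hom (ru x);
            sy := fun x y => tors_rel_hom (sy x y) |};
  intros; apply proof_irrelevance.
Defined.

Lemma free_hom_eq (G : SG) (x y : ob G) (a b : hom (s := free_gpd G) x y) : a = b.
Proof. exact (proof_irrelevance (tors_rel x y) a b). Qed.

Lemma tpow_free (G : SG) (X : ob G) n : @tpow (free_gpd G) X n = tpow X n.
Proof.
  induction n as [|[|n] IH]; [reflexivity | reflexivity |].
  change (X ⊗ @tpow (free_gpd G) X (S n) = X ⊗ tpow X (S n)). rewrite IH. reflexivity.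
Qed.

Lemma free_gpd_winv (G : SG) (A : ob (free_gpd G)) : weakly_invertible A.
Proof.
  destruct (sg_winv G A) as [B [[f _] [g _]]]. exists B.
  split; [exact (Iso_hom (tors_rel_hom f : hom (s := free_gpd G) _ _))
         | exact (Iso_hom (tors_rel_hom g : hom (s := free_gpd G) _ _))].
Qed.

Definition FreeSG (G : SG) : SG := {| sg_gpd := free_gpd G; sg_winv := free_gpd_winv G |}.

Lemma FreeSG_torsion_free (G : SG) : is_torsion_free (FreeSG G).
Proof.
  intros X [n [Hn [f _]]]. simpl in f. rewrite tpow_free in f.
  assert (HX : torsion_obj (G := G) X).
  { apply (torsion_obj_upow_inv (G := G) X n Hn). rewrite <- tpow_upow by exact Hn.
    exact (tors_rel_unit_torsion f). }
  exists (tors_rel_unit HX : hom (s := FreeSG G) X unitob).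
  split; [apply isIso_hom | intros; apply free_hom_eq].
Qed.

Definition tors_incl (G : SG) : Fun (TorsSG G) G :=
  Build_Fun (TorsSG G) G (fun a : tors_ob G => proj1_sig a) (fun a b f => f) (idm unitob)
    (fun a b => idm (proj1_sig a ⊗ proj1_sig b)).

Definition free_proj (G : SG) : Fun G (FreeSG G) :=
  Build_Fun G (FreeSG G) (fun x : ob G => x) (fun (x y : ob G) (f : hom x y) => tors_rel_hom f)
    (tors_rel_hom (idm (@unitob G))) (fun x y : ob G => tors_rel_hom (idm (x ⊗ y))).

Definition theta_tors_free (G : SG) : ThetaData (compF (free_proj G) (tors_incl G)) :=
  fun a => tors_rel_unit (proj2_sig a).

Lemma tors_incl_smf (G : SG) : is_smf (tors_incl G).
Proof. repeat split; intros; simpl; rewrite ?tenm_id, ?idl, ?idr; reflexivity. Qed.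

Lemma free_proj_smf (G : SG) : is_smf (free_proj G).
Proof. repeat split; intros; apply free_hom_eq. Qed.

Lemma theta_tors_free_theta (G : SG) : is_theta _ (theta_tors_free G).
Proof. repeat split; intros; apply free_hom_eq. Qed.

(** * The Θ-kernel property *)

(* [ThetaData F] only depends on [fo F]; these transport [existT] equalities along that. *)
Lemma existT_ThetaData_eq {M N : SMGpd} (F1 F2 : Fun M N) (a : ThetaData F1) (b : ThetaData F2) :
  F1 = F2 ->
  existT (fun f : ob M -> ob N => forall x, hom (f x) unitob) (fo F1) a
  = existT (fun f : ob M -> ob N => forall x, hom (f x) unitob) (fo F2) b ->
  existT (@ThetaData M N) F1 a = existT _ F2 b.
Proof. intros <- E. apply inj_pair2 in E. subst. reflexivity. Qed.

Lemma existT_ThetaData_fo {M N : SMGpd} (F1 F2 : Fun M N) (a : ThetaData F1) (b : ThetaData F2) :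
  existT (@ThetaData M N) F1 a = existT _ F2 b ->
  existT (fun f : ob M -> ob N => forall x, hom (f x) unitob) (fo F1) a
  = existT (fun f : ob M -> ob N => forall x, hom (f x) unitob) (fo F2) b.
Proof.
  intro E.
  exact (f_equal (fun s : {F : Fun M N & ThetaData F} =>
    existT (fun f : ob M -> ob N => forall x, hom (f x) unitob) (fo (projT1 s)) (projT2 s)) E).
Qed.

Lemma Fun_free_eq {M : SMGpd} (G : SG) (F1 F2 : Fun M (FreeSG G)) : fo F1 = fo F2 -> F1 = F2.
Proof.
  destruct F1 as [fo1 fm1 fe1 fmu1], F2 as [fo2 fm2 fe2 fmu2]; simpl; intros <-.
  f_equal; [| apply free_hom_eq |].
  - do 3 (apply functional_extensionality_dep; intro). apply free_hom_eq.
  - do 2 (apply functional_extensionality_dep; intro). apply free_hom_eq.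
Qed.

Definition tors_corestr {G : SG} {H : SMGpd} (h : Fun H G) (P : forall x, torsion_obj (fo h x))
  : Fun H (TorsSG G) :=
  Build_Fun H (TorsSG G) (fun x => exist _ (fo h x) (P x)) (fun x y f => fm h f) (fe h) (fmu h).

Lemma tors_incl_corestr (G : SG) (H : SMGpd) (h : Fun H G) (P : forall x, torsion_obj (fo h x)) :
  compF (tors_incl G) (tors_corestr h P) = h.
Proof.
  destruct h as [fo1 fm1 fe1 fmu1]. unfold compF, tors_corestr. simpl.
  rewrite idr. f_equal.
  do 2 (apply functional_extensionality_dep; intro). apply idr.
Qed.

Lemma tors_corestr_incl (G : SG) (H : SMGpd) (k : Fun H (TorsSG G))
  (P : forall x, torsion_obj (fo (compF (tors_incl G) k) x)) :
  tors_corestr (compF (tors_incl G) k) P = k.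
Proof.
  destruct k as [fo1 fm1 fe1 fmu1]. unfold compF, tors_corestr. simpl in *.
  rewrite idr.
  replace (fun x y => fmu1 x y ∘ idm _) with fmu1
    by (do 2 (apply functional_extensionality_dep; intro); symmetry; apply idr).
  assert (Eeta : (fun x => exist _ (proj1_sig (fo1 x)) (proj2_sig (fo1 x))) = fo1)
    by (apply functional_extensionality; intro x; destruct (fo1 x); reflexivity).
  revert P fm1 fe1 fmu1. rewrite <- Eeta. intros P fm1 fe1 fmu1.
  replace P with (fun x => proj2_sig (fo1 x))
    by (apply functional_extensionality_dep; intro; apply proof_irrelevance).
  reflexivity.
Qed.

Lemma tors_incl_theta_kernel (G : SG) :
  theta_kernel (free_proj G) (TorsSG G) (tors_incl G) (theta_tors_free G).
Proof.
  split; [apply tors_incl_smf | split; [apply theta_tors_free_theta |]].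
  intros H h phi Hh Hphi.
  assert (P : forall x, torsion_obj (fo h x)) by (intro x; exact (tors_rel_unit_torsion (phi x))).
  exists (tors_corestr h P). split.
  - split; [exact Hh | split; [apply tors_incl_corestr |]].
    apply existT_ThetaData_eq; [apply Fun_free_eq; reflexivity |].
    f_equal. apply functional_extensionality_dep; intro x. apply free_hom_eq.
  - intros h'' _ <- _. symmetry. apply tors_corestr_incl.
Qed.

(** * The Θ-cokernel property *)

Lemma tenm_idm_r_reflects_idm (D : SG) {v w : ob D} (u : hom v v) :
  tenm u (idm w) = idm _ -> u = idm v.
Proof.
  intro E. destruct (sg_winv D w) as [w' [[e _] _]].
  assert (E1 : tenm u (idm (w ⊗ w')) = idm _).
  { apply (cmp_cancel_r (asc v w w')).
    rewrite <- (tenm_id w w'), <- asc_nat, E, !tenm_id, idl, idr. reflexivity. }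
  assert (E2 : tenm u (idm unitob) = idm _).
  { apply (cmp_cancel_r (tenm (idm v) e)).
    rewrite idl, <- tenm_decomp, tenm_decomp', E1, idr. reflexivity. }
  apply (cmp_cancel_r (ru v)). rewrite <- ru_nat, E2, idl, idr. reflexivity.
Qed.

Section Cokernel.
Context {G D : SG} (d : Fun G D) (Hd : is_smf d)
  (psi : ThetaData (compF d (tors_incl G))) (Hpsi : is_theta _ psi).

Lemma fm_endo_idm (a : ob G) (h : hom a a) : fm d h = idm _.
Proof.
  destruct (sg_winv G a) as [a' [Ha _]].
  set (z := exist _ (a ⊗ a') (torsion_obj_Iso_unit _ Ha) : tors_ob G).
  assert (E : fm d (tenm h (idm a')) = idm _).
  { apply (cmp_cancel_l (psi z)). rewrite idr.
    exact (theta_nat Hpsi (x := z) (y := z) (tenm h (idm a'))). }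
  apply (tenm_idm_r_reflects_idm D (w := fo d a')), (cmp_cancel_l (fmu d a a')).
  rewrite idr, <- (smf_idm Hd a'), smf_fmu_nat, E, idl by exact Hd. reflexivity.
Qed.

Lemma fm_parallel (a b : ob G) (g1 g2 : hom a b) : fm d g1 = fm d g2.
Proof.
  rewrite <- (cmpKVl g2 g1), (smf_cmp Hd), fm_endo_idm, idr. reflexivity.
Qed.

Definition witness_hom (a : tors_ob G) {x y : ob G} (f : hom x (proj1_sig a ⊗ y))
  : hom (fo d x) (fo d y) :=
  lu (fo d y) ∘ tenm (psi a) (idm (fo d y)) ∘ inv (fmu d (proj1_sig a) y) ∘ fm d f.

Lemma witness_hom_indep (a a' : tors_ob G) {x y : ob G}
  (f : hom x (proj1_sig a ⊗ y)) (f' : hom x (proj1_sig a' ⊗ y)) :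
  witness_hom a f = witness_hom a' f'.
Proof.
  destruct (Iso_ten_cancel_r _ _ y (Iso_hom (f' ∘ inv f))) as [s _].
  assert (E : fm d f' = fm d (tenm s (idm y)) ∘ fm d f)
    by (rewrite <- (smf_cmp Hd); apply fm_parallel).
  unfold witness_hom. rewrite E. rewrite_assoc (smf_fmu_inv_l Hd (y := y) s).
  rewrite_assoc (tenm_cmp_l (y := fo d y) (psi a') (fm d s)).
  assert (Es : psi a' ∘ fm d s = psi a) by exact (theta_nat Hpsi (x := a) (y := a') s).
  rewrite Es. reflexivity.
Qed.

Definition coker_hom (x y : ob G) (r : tors_rel x y) : hom (fo d x) (fo d y) :=
  let s := constructive_indefinite_description _ r in
  let f := constructive_indefinite_description _ (proj2 (proj2_sig s)) in
  witness_hom (exist _ (proj1_sig s) (proj1 (proj2_sig s))) (proj1_sig f).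

Lemma coker_hom_witness (x y : ob G) (r : tors_rel x y) (a : tors_ob G)
  (f : hom x (proj1_sig a ⊗ y)) : coker_hom x y r = witness_hom a f.
Proof. apply witness_hom_indep. Qed.

Lemma coker_hom_hom (x y : ob G) (r : tors_rel x y) (g : hom x y) : coker_hom x y r = fm d g.
Proof.
  rewrite (coker_hom_witness x y r (@unitob (TorsSG G)) (inv (lu y) ∘ g)).
  assert (Hfe : psi unitob ∘ fe d = idm _).
  { generalize (theta_fe Hpsi). simpl. rewrite (smf_idm Hd), idl. exact id. }
  unfold witness_hom. rewrite (smf_cmp Hd), (smf_inv Hd).
  rewrite_assoc (inv_cmp3 _ _ _ _ (smf_lu Hd y)).
  rewrite_assoc (tenm_cmp_l (y := fo d y) (psi unitob) (fe d)).
  rewrite Hfe, tenm_id, idr, invr, idl. reflexivity.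
Qed.

Lemma coker_hom_cmp (x y z : ob G) (r1 : tors_rel x y) (r2 : tors_rel y z) (r : tors_rel x z) :
  coker_hom x z r = coker_hom y z r2 ∘ coker_hom x y r1.
Proof.
  pose proof r1 as [t [Ht [f _]]]. pose proof r2 as [s [Hs [g _]]].
  set (a := exist _ t Ht : tors_ob G). set (b := exist _ s Hs : tors_ob G).
  set (ab := @ten (TorsSG G) a b).
  rewrite (coker_hom_witness x y r1 a f), (coker_hom_witness y z r2 b g),
    (coker_hom_witness x z r ab (inv (asc t s z) ∘ tenm (idm t) g ∘ f)).
  assert (Hab : psi ab ∘ fmu d t s = lu unitob ∘ tenm (psi a) (psi b)).
  { generalize (theta_fmu Hpsi a b). simpl. rewrite (smf_idm Hd), idl. exact id. }
  assert (E : inv (fmu d (t ⊗ s) z) ∘ inv (fm d (asc t s z))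
              = tenm (fmu d t s) (idm _) ∘ inv (fmu d t (s ⊗ z) ∘ tenm (idm _) (fmu d s z)
                                                ∘ asc _ _ _)).
  { apply inv_cmp3, (smf_asc Hd). }
  rewrite !inv_cmp, inv_tenm, inv_idm in E.
  unfold witness_hom. rewrite !(smf_cmp Hd), (smf_inv Hd).
  rewrite_assoc E. rewrite_assoc (smf_fmu_inv_r Hd (x := t) g).
  rewrite_assoc (tenm_cmp_l (y := fo d z) (psi ab) (fmu d t s)).
  rewrite Hab.
  rewrite_assoc (tenm_cmp_r (x := fo d t) (inv (fmu d s z)) (fm d g)).
  f_equal. f_equal. rewrite contract_two_units. reassoc. reflexivity.
Qed.

Lemma coker_hom_ten_l (x x' y : ob G) (r : tors_rel x x') (r' : tors_rel (x ⊗ y) (x' ⊗ y)) :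
  fmu d x' y ∘ tenm (coker_hom x x' r) (idm (fo d y)) = coker_hom _ _ r' ∘ fmu d x y.
Proof.
  pose proof r as [t [Ht [f _]]]. set (a := exist _ t Ht : tors_ob G).
  rewrite (coker_hom_witness x x' r a f),
    (coker_hom_witness _ _ r' a (asc t x' y ∘ tenm f (idm y))).
  assert (E1 : fm d (tenm f (idm y)) ∘ fmu d x y = fmu d (t ⊗ x') y ∘ tenm (fm d f) (idm _))
    by (rewrite <- (smf_fmu_nat Hd), (smf_idm Hd); reflexivity).
  assert (E2 : fm d (asc t x' y) ∘ fmu d (t ⊗ x') y
     = fmu d t (x' ⊗ y) ∘ tenm (idm _) (fmu d x' y) ∘ asc _ _ _
       ∘ inv (tenm (fmu d t x') (idm _)))
    by (rewrite <- (smf_asc Hd), cmpKr; reflexivity).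
  unfold witness_hom. rewrite (smf_cmp Hd).
  rewrite_assoc E1. rewrite_assoc E2. rewrite cmpKVr, inv_tenm, inv_idm, <- !tenm_cmp_l.
  reassoc. f_equal. f_equal. apply contract_unit_assoc.
Qed.

Lemma coker_hom_ten (x x' y y' : ob G) (r1 : tors_rel x x') (r2 : tors_rel y y')
  (r : tors_rel (x ⊗ y) (x' ⊗ y')) :
  fmu d x' y' ∘ tenm (coker_hom x x' r1) (coker_hom y y' r2) = coker_hom _ _ r ∘ fmu d x y.
Proof.
  set (ra := tors_rel_ten r1 (tors_rel_hom (idm y'))).
  set (rb := tors_rel_ten r2 (tors_rel_hom (idm x))).
  set (s1 := tors_rel_hom (sy y' x)).
  set (s2 := tors_rel_hom (sy x y)).
  assert (E1 : tenm (idm (fo d x)) (coker_hom y y' r2)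
               = sy (fo d y') (fo d x) ∘ tenm (coker_hom y y' r2) (idm (fo d x))
                 ∘ sy (fo d x) (fo d y))
    by (rewrite sy_nat, <- cmpA, sy_invol, idr; reflexivity).
  rewrite tenm_decomp. rewrite_assoc (coker_hom_ten_l x x' y' r1 ra). rewrite E1.
  rewrite_assoc (eq_sym (smf_sy Hd y' x)). rewrite_assoc (coker_hom_ten_l y y' x r2 rb).
  rewrite_assoc (eq_sym (smf_sy Hd x y)).
  rewrite <- (coker_hom_hom _ _ s1), <- (coker_hom_hom _ _ s2).
  set (r3 := tors_rel_trans ra s1). set (r4 := tors_rel_trans r3 rb).
  rewrite <- (coker_hom_cmp _ _ _ s1 ra r3), <- (coker_hom_cmp _ _ _ rb r3 r4),
    <- (coker_hom_cmp _ _ _ s2 r4 r).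
  reflexivity.
Qed.

Lemma coker_hom_tors (a : tors_ob G) (r : tors_rel (proj1_sig a) unitob) :
  coker_hom _ _ r = fe d ∘ psi a.
Proof.
  rewrite (coker_hom_witness _ _ r a (inv (ru (proj1_sig a)))).
  unfold witness_hom. rewrite (smf_inv Hd).
  rewrite_assoc (inv_cmp3 _ _ _ _ (smf_ru Hd (proj1_sig a))).
  rewrite <- (cmpA _ (tenm _ (idm _))), <- tenm_commute. reassoc.
  rewrite lu_nat. reassoc.
  rewrite lu_unit_ru_unit. rewrite_assoc (ru_nat (psi a)). rewrite cmpKr. reflexivity.
Qed.

Definition coker_factor : Fun (FreeSG G) D :=
  Build_Fun (FreeSG G) D (fo d) coker_hom (fe d) (fmu d).

Lemma coker_factor_smf : is_smf coker_factor.
Proof.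
  unfold coker_factor. repeat split; intros; cbn -[coker_hom].
  - rewrite (coker_hom_hom _ _ _ (@idm G x)). apply (smf_idm Hd).
  - apply coker_hom_cmp.
  - apply coker_hom_ten.
  - rewrite (coker_hom_hom _ _ _ (@asc G x y z)). apply (smf_asc Hd).
  - rewrite (coker_hom_hom _ _ _ (@lu G x)). apply (smf_lu Hd).
  - rewrite (coker_hom_hom _ _ _ (@ru G x)). apply (smf_ru Hd).
  - rewrite (coker_hom_hom _ _ _ (@sy G x y)). apply (smf_sy Hd).
Qed.

Lemma coker_hom_free_proj :
  (fun x y (f : hom x y) => coker_hom x y (tors_rel_hom f)) = @fm _ _ d.
Proof.
  do 3 (apply functional_extensionality_dep; intro). apply coker_hom_hom.
Qed.

Lemma coker_factor_free_proj : compF coker_factor (free_proj G) = d.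
Proof.
  transitivity (Build_Fun G D (fo d) (@fm _ _ d) (fe d) (fmu d)); [| destruct d; reflexivity].
  unfold compF, coker_factor. cbn -[coker_hom].
  rewrite (coker_hom_hom _ _ _ (idm unitob)), (smf_idm Hd), idl, coker_hom_free_proj.
  f_equal. do 2 (apply functional_extensionality_dep; intro).
  rewrite (coker_hom_hom _ _ _ (idm _)), (smf_idm Hd), idl. reflexivity.
Qed.

Lemma coker_factor_theta :
  existT (@ThetaData (TorsSG G) D)
    (compF coker_factor (compF (free_proj G) (tors_incl G)))
    (rwhisk coker_factor (theta_tors_free G))
  = existT (@ThetaData (TorsSG G) D) (compF d (tors_incl G)) psi.
Proof.
  apply existT_ThetaData_eq.
  - unfold compF, coker_factor. cbn -[coker_hom].
    rewrite !(coker_hom_hom _ _ _ (idm _)).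
    replace (fun (x y : tors_ob G) (f : hom (proj1_sig x) (proj1_sig y)) =>
               coker_hom (proj1_sig x) (proj1_sig y) (tors_rel_hom f))
      with (fun (x y : tors_ob G) (f : hom (proj1_sig x) (proj1_sig y)) => fm d f)
      by (do 3 (apply functional_extensionality_dep; intro); symmetry; apply coker_hom_hom).
    f_equal. do 2 (apply functional_extensionality_dep; intro).
    rewrite (coker_hom_hom _ _ _ (idm _)). reflexivity.
  - f_equal. apply functional_extensionality_dep. intro a.
    unfold rwhisk. cbn -[coker_hom]. rewrite coker_hom_tors. apply cmpKl.
Qed.

Lemma coker_hom_unique (φ : forall x y : ob G, tors_rel x y -> hom (fo d x) (fo d y)) :
  (forall x y (g : hom x y), φ x y (tors_rel_hom g) = fm d g) ->
  (forall x y z (g : tors_rel y z) (f : tors_rel x y),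
      φ x z (tors_rel_trans g f) = φ y z g ∘ φ x y f) ->
  (forall x x' y y' (f : tors_rel x x') (g : tors_rel y y'),
      fmu d x' y' ∘ tenm (φ x x' f) (φ y y' g) = φ _ _ (tors_rel_ten f g) ∘ fmu d x y) ->
  (forall a : tors_ob G, φ _ _ (tors_rel_unit (proj2_sig a)) = fe d ∘ psi a) ->
  forall x y r, φ x y r = coker_hom x y r.
Proof.
  intros Hhom Hcmp Hten Htors x y r.
  pose proof r as [t [Ht [f _]]]. set (a := exist _ t Ht : tors_ob G).
  rewrite (coker_hom_witness x y r a f).
  rewrite (proof_irrelevance _ r (tors_rel_trans (tors_rel_trans (tors_rel_hom (lu y))
             (tors_rel_ten (tors_rel_unit Ht) (tors_rel_hom (idm y)))) (tors_rel_hom f))).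
  rewrite !Hcmp, !Hhom.
  assert (ET : φ _ _ (tors_rel_ten (tors_rel_unit Ht) (tors_rel_hom (idm y)))
               = fmu d unitob y ∘ tenm (fe d ∘ psi a) (idm _) ∘ inv (fmu d t y)).
  { apply (cmp_cancel_r (fmu d t y)).
    rewrite cmpKVr, <- Hten. rewrite (Htors a : φ t unitob (tors_rel_unit Ht) = _).
    rewrite Hhom, (smf_idm Hd). reflexivity. }
  unfold witness_hom. rewrite ET, <- tenm_cmp_l. reassoc.
  rewrite (smf_lu Hd y). reflexivity.
Qed.

End Cokernel.

Lemma coker_factor_unique {G D : SG} (e : Fun (FreeSG G) D) (He : is_smf e)
  (Hd : is_smf (compF e (free_proj G)))
  (psi : ThetaData (compF (compF e (free_proj G)) (tors_incl G))) (Hpsi : is_theta _ psi) :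
  (forall a, inv (fe e) ∘ fm e (theta_tors_free G a) = psi a) ->
  e = coker_factor (compF e (free_proj G)) psi.
Proof.
  intro Htheta.
  assert (Efmu : forall x y, fmu (compF e (free_proj G)) x y = fmu e x y)
    by (intros; simpl; rewrite (smf_idm He), idl; reflexivity).
  assert (Efe : fe (compF e (free_proj G)) = fe e)
    by (simpl; rewrite (smf_idm He), idl; reflexivity).
  assert (Efm : coker_hom (compF e (free_proj G)) psi = @fm _ _ e).
  { do 3 (apply functional_extensionality_dep; intro). symmetry.
    apply (coker_hom_unique _ Hd _ Hpsi (@fm _ _ e)).
    - reflexivity.
    - intros. apply (smf_cmp He).
    - intros. rewrite !Efmu. apply (smf_fmu_nat He).
    - intro a. rewrite Efe, <- (Htheta a), cmpKVl. reflexivity. }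
  transitivity (Build_Fun (FreeSG G) D (fo e) (@fm _ _ e) (fe e) (fmu e));
    [destruct e; reflexivity |].
  unfold coker_factor. rewrite Efm, Efe.
  replace (fmu (compF e (free_proj G))) with (fmu e)
    by (do 2 (apply functional_extensionality_dep; intro); symmetry; apply Efmu).
  reflexivity.
Qed.

Lemma free_proj_theta_cokernel (G : SG) :
  theta_cokernel (tors_incl G) (FreeSG G) (free_proj G) (theta_tors_free G).
Proof.
  split; [apply free_proj_smf | split; [apply theta_tors_free_theta |]].
  intros D d psi Hd Hpsi.
  exists (coker_factor d psi). split.
  - split; [apply coker_factor_smf; assumption |].
    split; [apply coker_factor_free_proj; assumption | apply coker_factor_theta; assumption].
  - intros e He <- Htheta. apply coker_factor_unique; try assumption.
    intro a. apply existT_ThetaData_fo, inj_pair2 in Htheta.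
    exact (f_equal (fun k => k a) Htheta).
Qed.

Theorem proposition11p2 :
  (* (i) Theta(G) is a singleton for G : torsion -> torsion-free *)
  (forall (T F : SG) (G : Fun T F),
      is_torsion T -> is_torsion_free F -> is_smf G ->
      exists phi : ThetaData G,
        is_theta G phi /\ forall psi : ThetaData G, is_theta G psi -> psi = phi) /\
  (* (ii) every symmetric 2-group sits in a Theta-exact sequence T -> G -> F *)
  (forall G : SG,
      exists (T F : SG) (t : Fun T G) (p : Fun G F) (theta : ThetaData (compF p t)),
        is_torsion T /\ is_torsion_free F /\ theta_exact t p theta).
Proof.
  split.
  - intros T F G HT HF _. exact (Theta_torsion_torsion_free_singleton T F G HT HF).
  - intro G. exists (TorsSG G), (FreeSG G), (tors_incl G), (free_proj G), (theta_tors_free G).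
    split; [apply TorsSG_torsion |].
    split; [apply FreeSG_torsion_free |].
    split; [apply tors_incl_theta_kernel | apply free_proj_theta_cokernel].
Qed.
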